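(* Suppose $\mathbf{a}=\{a_n\}_{n=1}^\infty$ and $\mathbf{b}=\{b_n\}_{n=1}^\infty$ are linearly recurrent sequences of complex numbers such that $|a_n-b_n|$ is bounded. Then the minimal polynomials of $\mathbf{a}$ and $\mathbf{b}$ have the same roots outside the unit circle, with the same multiplicities. In particular, $\max_k \mathrm{GR}^{(k)}(\mathbf{a})=\max_k\mathrm{GR}^{(k)}(\mathbf{b})$.
   Context: A linear recurrence is a relation $a_{n+d}+c_{d-1}a_{n+d-1}+\cdots+c_0a_n=0$ for all $n$ with constant complex coefficients; a sequence is linearly recurrent if it satisfies one, and its minimal polynomial is the unique monic characteristic polynomial $t^d+c_{d-1}t^{d-1}+\cdots+c_0$ of minimal degree of a linear recurrence it satisfies. For a complex sequence $\mathbf{a}$ and $k\ge1$, $\mathrm{GR}^{(k)}(\mathbf{a})=\limsup_{n\to\infty}|\det H_{n,k}|^{1/n}$, where $H_{n,k}$ is the $k\times k$ matrix with $(i,j)$ entry $a_{n+i+j}$ ($0\le i,j\le k-1$); $\mathrm{GR}^{(0)}(\mathbf{a})=1$. *)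

From HB Require Import structures.
From mathcomp Require Import all_boot all_order all_algebra.
From mathcomp Require Import all_classical all_reals all_analysis.
From mathcomp Require Import complex.
Set Implicit Arguments. Unset Strict Implicit. Unset Printing Implicit Defensive.
Import Order.TTheory GRing.Theory Num.Theory.
Local Open Scope ring_scope.

Section Defs.
Variable R : realType.
Local Notation C := R[i].

Definition satisfies_rec (a : nat -> C) (p : {poly C}) : Prop :=
  forall n : nat, \sum_(i < size p) p`_i * a (n + i)%N = 0.

Definition lin_recurrent (a : nat -> C) : Prop :=
  exists p : {poly C}, p \is monic /\ satisfies_rec a p.

Definition is_minpoly (a : nat -> C) (p : {poly C}) : Prop :=
  [/\ p \is monic, satisfies_rec a p &
      forall q : {poly C}, q \is monic -> satisfies_rec a q -> (size p <= size q)%N].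

Definition hankel (a : nat -> C) (n k : nat) : 'M[C]_k :=
  \matrix_(i < k, j < k) a (n + i + j)%N.

Definition GR (k : nat) (a : nat -> C) : \bar R :=
  if k is 0 then 1%E
  else limn_esup (fun n : nat => ((Normc.normc (\det (hankel a n k))) `^ (n%:R^-1))%:E).

End Defs.

From HB Require Import structures.
From mathcomp Require Import all_boot all_order all_algebra all_fingroup.
From mathcomp Require Import all_classical all_reals all_analysis.
From mathcomp Require Import complex.
From mathcomp Require Import ring lra zify.
Import Order.TTheory GRing.Theory Num.Theory.
Local Open Scope ring_scope.
Set Implicit Arguments. Unset Strict Implicit. Unset Printing Implicit Defensive.

(* If a - b is bounded, a root z with |z| > 1 can be cancelled from any
   annihilator of a - b: the sequence it would govern is geometric of ratio z
   and bounded, hence zero.  So pb times the factors of pa pb vanishing in the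
   closed unit disc annihilates a; the minimal polynomial pa divides it, giving
   mup z pa <= mup z pb, and symmetrically.

   The supremum of the growth rates of a is the Mahler measure
   M = prod max(1, |w|) over the roots w of pa.  Upper bound: unitriangular
   column operations turn column j of H_{n,k} into a sequence annihilated by
   the roots of pa smaller than its j-th largest one, so |det H_{n,k}| grows
   at most like (rho M)^n for every rho > 1.  Lower bound: split a = A + s
   along the roots outside and inside the closed unit disc and let m be the
   number of large roots.  Since H_{n+1,m}(A) is the companion matrix times
   H_{n,m}(A), |det H_{n,m}(A)| = D M^n with D <> 0 by minimality, and s only
   perturbs det H_{n,m}(a) by a term of smaller exponential order.  M only
   depends on the large roots, which agree for a and b by the first part. *)

Section PolyShift.
Variable K : comNzRingType.
Implicit Types (p q : {poly K}) (a b : nat -> K).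

(* [pshift p a] is the sequence [p(S) a], where [S] is the left shift. *)
Definition pshift p a : nat -> K :=
  fun n => \sum_(i < size p) p`_i * a (n + i)%N.

Lemma pshift_widen p a n N : (size p <= N)%N ->
  pshift p a n = \sum_(i < N) p`_i * a (n + i)%N.
Proof.
move=> leN; rewrite /pshift (big_ord_widen N (fun i => p`_i * a (n + i)%N) leN).
rewrite big_mkcond; apply: eq_bigr => i _; case: ltnP => // /(nth_default 0) ->.
by rewrite mul0r.
Qed.

Lemma eq_pshift p a b : a =1 b -> pshift p a =1 pshift p b.
Proof. by move=> eq_ab n; apply: eq_bigr => i _; rewrite eq_ab. Qed.

Lemma pshiftD p q a n : pshift (p + q) a n = pshift p a n + pshift q a n.
Proof.
pose N := maxn (size p) (size q).
rewrite (@pshift_widen (p + q) _ _ N) ?size_polyD // (@pshift_widen p _ _ N) ?leq_maxl //.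
rewrite (@pshift_widen q _ _ N) ?leq_maxr // -big_split.
by apply: eq_bigr => i _; rewrite coefD mulrDl.
Qed.

Lemma pshiftZ c p a n : pshift (c *: p) a n = c * pshift p a n.
Proof.
rewrite (@pshift_widen _ _ _ (size p)) ?size_scale_leq // mulr_sumr.
by apply: eq_bigr => i _; rewrite coefZ mulrA.
Qed.

Lemma pshiftC c a n : pshift c%:P a n = c * a n.
Proof.
by rewrite (@pshift_widen _ _ _ 1) ?size_polyC ?leq_b1 // big_ord1 coefC addn0.
Qed.

Lemma pshift1 a n : pshift 1 a n = a n.
Proof. by rewrite pshiftC mul1r. Qed.

Lemma pshiftMX p a n : pshift (p * 'X) a n = pshift p a n.+1.
Proof.
rewrite (@pshift_widen _ _ _ (size p).+1); last first.
  by have [->|p0] := eqVneq p 0; rewrite ?mul0r ?size_poly0 ?size_mulX.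
rewrite big_ord_recl coefMX mul0r add0r.
by apply: eq_bigr => i _; rewrite coefMX addSnnS.
Qed.

Lemma pshiftM p q a n : pshift (p * q) a n = pshift p (pshift q a) n.
Proof.
elim/poly_ind: p n => [|p c IHp] n; first by rewrite mul0r /pshift size_poly0 !big_ord0.
by rewrite mulrDl mulrAC !pshiftD !pshiftMX IHp !mul_polyC pshiftZ pshiftC.
Qed.

Lemma pshiftXsubC z a n : pshift ('X - z%:P) a n = a n.+1 - z * a n.
Proof. by rewrite -['X]mul1r -polyCN pshiftD pshiftMX pshift1 pshiftC mulNr. Qed.

Lemma pshift_seqD p a b n :
  pshift p (fun m => a m + b m) n = pshift p a n + pshift p b n.
Proof. by rewrite /pshift -big_split; apply: eq_bigr => i _; rewrite mulrDr. Qed.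

Lemma pshift_seqB p a b n :
  pshift p (fun m => a m - b m) n = pshift p a n - pshift p b n.
Proof.
rewrite pshift_seqD; congr (_ + _); rewrite /pshift -sumrN.
by apply: eq_bigr => i _; rewrite mulrN.
Qed.

Lemma pshift_seq0 p n : pshift p (fun=> 0) n = 0.
Proof. by rewrite /pshift big1 // => i _; rewrite mulr0. Qed.

End PolyShift.

Section Annihilators.
Variable R : realType.
Local Notation C := R[i].
Implicit Types (p q : {poly C}) (a b : nat -> C).

Lemma satisfies_recE a p : satisfies_rec a p = forall n, pshift p a n = 0.
Proof. by []. Qed.

Lemma satisfies_recMl a p q : satisfies_rec a q -> satisfies_rec a (p * q).
Proof. by rewrite !satisfies_recE => aq n; rewrite pshiftM (eq_pshift _ aq) pshift_seq0. Qed.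

Lemma satisfies_recMr a p q : satisfies_rec a p -> satisfies_rec a (p * q).
Proof. by rewrite mulrC; apply: satisfies_recMl. Qed.

Lemma satisfies_rec_pshift a p q :
  satisfies_rec a (q * p) -> satisfies_rec (pshift p a) q.
Proof. by rewrite !satisfies_recE => aqp n; rewrite -pshiftM. Qed.

Lemma satisfies_recD a p q :
  satisfies_rec a p -> satisfies_rec a q -> satisfies_rec a (p + q).
Proof. by rewrite !satisfies_recE => ap aq n; rewrite pshiftD ap aq addr0. Qed.

Lemma satisfies_recZ a c p : satisfies_rec a p -> satisfies_rec a (c *: p).
Proof. by rewrite !satisfies_recE => ap n; rewrite pshiftZ ap mulr0. Qed.

Lemma satisfies_rec_seqD a b p :
  satisfies_rec a p -> satisfies_rec b p -> satisfies_rec (fun n => a n + b n) p.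
Proof. by rewrite !satisfies_recE => ap bp n; rewrite pshift_seqD ap bp addr0. Qed.

Lemma satisfies_rec_seqB a b p :
  satisfies_rec a p -> satisfies_rec b p -> satisfies_rec (fun n => a n - b n) p.
Proof. by rewrite !satisfies_recE => ap bp n; rewrite pshift_seqB ap bp subr0. Qed.

Lemma eq_satisfies_rec a b p : a =1 b -> satisfies_rec a p -> satisfies_rec b p.
Proof. by rewrite !satisfies_recE => eq_ab ap n; rewrite -(eq_pshift _ eq_ab). Qed.

End Annihilators.

Section Normc.
Variable R : rcfType.
Local Notation C := R[i].
Local Notation normc := (@Normc.normc R).
Implicit Types x y : C.

Lemma normc_ge0 x : 0 <= normc x.
Proof. by case: x => a b; apply: sqrtr_ge0. Qed.

Lemma normc_eq0 x : (normc x == 0) = (x == 0).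
Proof. by apply/eqP/eqP => [/Normc.eq0_normc //|->]; exact: Normc.normc0. Qed.

Lemma normc_gt0 x : (0 < normc x) = (x != 0).
Proof. by rewrite lt_def normc_eq0 normc_ge0 andbT. Qed.

Lemma normcB_le x y : normc (x - y) <= normc x + normc y.
Proof. by rewrite (le_trans (le_normcD _ _)) // normcN. Qed.

Lemma normc_sum (I : Type) (r : seq I) (P : pred I) (F : I -> C) :
  normc (\sum_(i <- r | P i) F i) <= \sum_(i <- r | P i) normc (F i).
Proof.
elim/big_rec2: _ => [|i y1 y2 _ le_y]; first by rewrite Normc.normc0.
by rewrite (le_trans (le_normcD _ _)) // lerD2l.
Qed.

Lemma normc_prod (I : Type) (r : seq I) (P : pred I) (F : I -> C) :
  normc (\prod_(i <- r | P i) F i) = \prod_(i <- r | P i) normc (F i).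
Proof.
elim/big_rec2: _ => [|i y1 y2 _ eq_y]; first by rewrite Normc.normc1.
by rewrite Normc.normcM eq_y.
Qed.

Lemma normcX x n : normc (x ^+ n) = normc x ^+ n.
Proof.
by elim: n => [|n IHn]; rewrite ?expr0 ?Normc.normc1 // !exprS Normc.normcM IHn.
Qed.

Lemma normc_sign n : normc ((-1) ^+ n) = 1.
Proof. by rewrite normcX normcN Normc.normc1 expr1n. Qed.

End Normc.

Section Powers.
Variable R : archiFieldType.
Implicit Types rho s t : R.

Lemma bernoulli_ineq rho n : 1 <= rho -> 1 + n%:R * (rho - 1) <= rho ^+ n.
Proof.
move=> rho_ge1; elim: n => [|n IHn]; first by rewrite mul0r addr0 expr0.
rewrite exprS (le_trans _ (ler_wpM2l (le_trans ler01 rho_ge1) IHn)) //.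
have : 0 <= n%:R * (rho - 1) * (rho - 1) by rewrite !mulr_ge0 ?subr_ge0.
rewrite -natr1; nra.
Qed.

Lemma expr_unbounded rho M : 1 < rho ->
  exists N, forall n, (N <= n)%N -> M <= rho ^+ n.
Proof.
move=> rho_gt1; exists (Num.truncn (M / (rho - 1))).+1 => n leNn.
have rho1_gt0 : 0 < rho - 1 by rewrite subr_gt0.
apply: le_trans (bernoulli_ineq n (ltW rho_gt1)).
have : M / (rho - 1) <= n%:R.
  by apply/ltW/(lt_le_trans (truncnS_gt _)); rewrite ler_nat.
rewrite ler_pdivrMr //; lra.
Qed.

Lemma exprD1_le m s : 0 <= s <= 1 -> (1 + s) ^+ m <= 1 + (2 ^+ m - 1) * s.
Proof.
case/andP => s_ge0 s_le1; elim: m => [|m IHm]; first by rewrite expr0 subrr mul0r addr0.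
rewrite exprS (le_trans (ler_wpM2l _ IHm)) ?addr_ge0 // exprS.
have : 1 <= (2 : R) ^+ m by rewrite exprn_ege1 // ler1n.
set q := (2 : R) ^+ m => q_ge1.
have : (q - 1) * (s * s) <= (q - 1) * s.
  by rewrite ler_wpM2l ?subr_ge0 // -[leRHS]mulr1 ler_wpM2l.
nra.
Qed.

Lemma exists_expr_le1D m t : 0 < t -> exists rho, 1 < rho /\ rho ^+ m <= 1 + t.
Proof.
move=> t_gt0; pose s := Num.min 1 (t / 2 ^+ m).
have pow2_gt0 : 0 < (2 : R) ^+ m by rewrite exprn_gt0.
have s_gt0 : 0 < s by rewrite lt_min ltr01 divr_gt0.
have s_le1 : s <= 1 by rewrite ge_min lexx.
have : 2 ^+ m * s <= t by rewrite -ler_pdivlMl // mulrC ge_min lexx orbT.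
exists (1 + s); split; first by rewrite ltrDl.
by apply: le_trans (exprD1_le m _) _; [rewrite ltW | nra].
Qed.

End Powers.

Section Limsup.
Variable R : realType.
Local Open Scope classical_set_scope.
Implicit Types (u : nat -> R) (c x y : R).

Lemma limn_esup_le u c N : (forall n, (N <= n)%N -> u n <= c) ->
  (limn_esup (fun n => (u n)%:E) <= c%:E)%E.
Proof.
move=> le_uc; apply: (@le_trans _ _ (ereal_sup ((fun n => (u n)%:E) @` [set n | (N <= n)%N]))).
  by apply: ereal_inf_lbound; exists [set n | (N <= n)%N] => //; exists N.
by apply: ge_ereal_sup => _ [n leNn <-]; rewrite lee_fin le_uc.
Qed.

Lemma limn_esup_ge u c N : (forall n, (N <= n)%N -> c <= u n) ->
  (c%:E <= limn_esup (fun n => (u n)%:E))%E.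
Proof.
move=> le_cu; apply: le_ereal_inf_tmp => _ [V [M _ MV] <-].
apply: (@le_trans _ _ (u (maxn N M))%:E); first by rewrite lee_fin le_cu ?leq_maxl.
by apply: ereal_sup_ubound; exists (maxn N M) => //; apply: MV; rewrite /= leq_maxr.
Qed.

Lemma powR_exprV y n : (0 < n)%N -> 0 <= y -> (y ^+ n) `^ (n%:R^-1) = y.
Proof.
move=> n_gt0 y_ge0; rewrite -powR_mulrn // -powRrM mulfV ?powRr1 //.
by rewrite pnatr_eq0 -lt0n.
Qed.

Lemma powRV_le x y n : (0 < n)%N -> 0 <= x -> 0 <= y -> x <= y ^+ n ->
  x `^ (n%:R^-1) <= y.
Proof.
move=> n_gt0 x_ge0 y_ge0 le_xy; rewrite -[leRHS](powR_exprV n_gt0 y_ge0).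
by apply: ge0_ler_powR; rewrite ?invr_ge0 ?ler0n // nnegrE exprn_ge0.
Qed.

Lemma powRV_ge x y n : (0 < n)%N -> 0 <= x -> 0 <= y -> y ^+ n <= x ->
  y <= x `^ (n%:R^-1).
Proof.
move=> n_gt0 x_ge0 y_ge0 le_yx; rewrite -[leLHS](powR_exprV n_gt0 y_ge0).
by apply: ge0_ler_powR; rewrite ?invr_ge0 ?ler0n // nnegrE exprn_ge0.
Qed.

End Limsup.

Section MinimalPolynomial.
Variable R : realType.
Local Notation C := R[i].
Implicit Types (p q : {poly C}) (a : nat -> C).

Lemma exists_minpoly a : lin_recurrent a -> exists pa, is_minpoly a pa.
Proof.
case=> p [p_monic ap].
elim: {p}(size p) {-2}p (leqnn (size p)) p_monic ap => [|n IHn] p le_pn p_monic ap.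
  by move: le_pn; rewrite leqn0 size_poly_eq0 (negPf (monic_neq0 p_monic)).
have [[q [q_monic aq lt_qp]]|no_smaller] :=
  pselect (exists q, [/\ q \is monic, satisfies_rec a q & (size q < size p)%N]).
  by apply: (IHn q) => //; rewrite -ltnS (leq_trans lt_qp).
exists p; split=> // q q_monic aq; rewrite leqNgt; apply/negP => lt_qp.
by apply: no_smaller; exists q.
Qed.

Lemma satisfies_rec_monic a p : p != 0 -> satisfies_rec a p ->
  satisfies_rec a ((lead_coef p)^-1 *: p) /\ (lead_coef p)^-1 *: p \is monic.
Proof.
move=> p_neq0 ap; split; first exact: satisfies_recZ.
by apply/monicP; rewrite lead_coefZ mulVf ?lead_coef_eq0.
Qed.

Lemma minpoly_dvdp a pa q : is_minpoly a pa -> satisfies_rec a q -> pa %| q.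
Proof.
case=> pa_monic apa pa_min aq; have pa_neq0 := monic_neq0 pa_monic.
have ar : satisfies_rec a (q %% pa).
  rewrite -[q %% pa](addKr (q %/ pa * pa)) addrC -divp_eq -mulNr.
  exact/satisfies_recD/satisfies_recMl.
apply/modp_eq0P/eqP/negPn/negP => r_neq0.
have [ar' r'_monic] := satisfies_rec_monic r_neq0 ar.
have := pa_min _ r'_monic ar'.
by rewrite size_scale ?invr_eq0 ?lead_coef_eq0 // leqNgt ltn_modp pa_neq0.
Qed.

Lemma dvdp_leq_mup (z : C) p q : q != 0 -> p %| q -> (mup z p <= mup z q)%N.
Proof.
move=> q_neq0 pq; have p_neq0 : p != 0 by apply: contraNneq q_neq0 => p0; rewrite -dvd0p -p0.
by rewrite mup_geq // (dvdp_trans _ pq) // -mup_geq.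
Qed.

End MinimalPolynomial.

Section BoundedAnnihilators.
Variable R : realType.
Local Notation C := R[i].
Local Notation normc := (@Normc.normc R).
Implicit Types (p q : {poly C}) (a b c : nat -> C) (z : C).

Definition bounded_seq c := exists M : R, forall n, normc (c n) <= M.

Lemma bounded_pshift c p : bounded_seq c -> bounded_seq (pshift p c).
Proof.
case=> M le_cM; exists (\sum_(i < size p) normc p`_i * M) => n.
apply: le_trans (normc_sum _ _ _) _; apply: ler_sum => i _.
by rewrite Normc.normcM ler_wpM2l ?normc_ge0.
Qed.

Lemma bounded_geometric z e0 : 1 < normc z ->
  bounded_seq (fun n => z ^+ n * e0) -> e0 = 0.
Proof.
move=> z_gt1 [M le_M]; apply/eqP/negPn/negP => e0_neq0.
have e0_gt0 : 0 < normc e0 by rewrite normc_gt0.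
have [N leN] := expr_unbounded (M / normc e0 + 1) z_gt1.
have := le_M N; rewrite Normc.normcM normcX.
have : (M / normc e0 + 1) * normc e0 <= normc z ^+ N * normc e0.
  by rewrite ler_pM2r // leN.
by rewrite mulrDl mulfVK ?gt_eqF // mul1r; lra.
Qed.

(* [r(S) c] is geometric of ratio [z] and bounded, hence zero. *)
Lemma satisfies_rec_XsubC_large c z r : bounded_seq c -> 1 < normc z ->
  satisfies_rec c (('X - z%:P) * r) -> satisfies_rec c r.
Proof.
move=> c_bd z_gt1; rewrite !satisfies_recE => czr.
pose e := pshift r c.
have eS n : e n.+1 = z * e n by apply/eqP; rewrite -subr_eq0 -pshiftXsubC -pshiftM czr.
have eE n : e n = z ^+ n * e 0%N.
  by elim: n => [|n IHn]; rewrite ?expr0 ?mul1r // eS IHn exprS mulrA.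
have e_bd : bounded_seq (fun n => z ^+ n * e 0%N).
  by have [M le_M] := bounded_pshift r c_bd; exists M => n; rewrite -eE.
by move=> n; rewrite -[pshift r c n]/(e n) eE (bounded_geometric z_gt1 e_bd) mulr0.
Qed.

Lemma satisfies_rec_small_roots c (rs : seq C) r : bounded_seq c ->
  satisfies_rec c (\prod_(w <- rs) ('X - w%:P) * r) ->
  satisfies_rec c (\prod_(w <- rs | normc w <= 1) ('X - w%:P) * r).
Proof.
move=> c_bd; elim: rs r => [|z rs IHrs] r; first by rewrite !big_nil.
rewrite !big_cons; case: ifPn => [_|]; last rewrite -ltNge => z_gt1.
  by rewrite -!mulrA => czr; rewrite mulrCA; apply: IHrs; rewrite mulrCA.
by rewrite -mulrA => czr; apply: IHrs; exact: satisfies_rec_XsubC_large czr.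
Qed.

Lemma mup_large_le a b pa pb z : bounded_seq (fun n => a n - b n) ->
  is_minpoly a pa -> is_minpoly b pb -> 1 < normc z -> (mup z pa <= mup z pb)%N.
Proof.
move=> ab_bd a_min b_min z_gt1.
have [pa_monic apa _] := a_min; have [pb_monic bpb _] := b_min.
have [rs] := closed_field_poly_normal (pa * pb).
rewrite (monicP (rpredM pa_monic pb_monic)) scale1r => papb_E.
set Q := \prod_(w <- rs | normc w <= 1) ('X - w%:P).
have ab_Q : satisfies_rec (fun n => a n - b n) Q.
  rewrite -[Q]mulr1; apply: satisfies_rec_small_roots => //.
  rewrite mulr1 -papb_E.
  by apply: satisfies_rec_seqB; [apply: satisfies_recMr | apply: satisfies_recMl].
have a_pbQ : satisfies_rec a (pb * Q).
  apply: (@eq_satisfies_rec _ (fun n => b n + (a n - b n))) => [n|].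
    by rewrite addrC subrK.
  by apply: satisfies_rec_seqD; [apply: satisfies_recMr | apply: satisfies_recMl].
have pbQ_neq0 : pb * Q != 0 by rewrite mulf_neq0 ?monic_neq0 ?monic_prod_XsubC.
have Q_z : ~~ root Q z.
  by rewrite /Q -big_filter root_prod_XsubC mem_filter negb_and -ltNge z_gt1.
by rewrite -[mup z pb](mupMl _ Q_z); apply: dvdp_leq_mup pbQ_neq0 (minpoly_dvdp a_min a_pbQ).
Qed.

End BoundedAnnihilators.

Section GeometricGrowth.
Variable R : realType.
Local Notation C := R[i].
Local Notation normc := (@Normc.normc R).
Implicit Types (x : nat -> C) (rho : R).

Definition geom_bounded x rho :=
  exists2 K : R, 0 <= K & forall n, normc (x n) <= K * rho ^+ n.

Lemma geom_bounded_roots (ws : seq C) x rho : 0 < rho ->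
  all (fun w => normc w < rho) ws ->
  satisfies_rec x (\prod_(w <- ws) ('X - w%:P)) -> geom_bounded x rho.
Proof.
move=> rho_gt0; elim: ws x => [|w ws IHws] x.
  move=> _; rewrite big_nil satisfies_recE => x0; exists 0 => // n.
  by rewrite -[x n]pshift1 x0 Normc.normc0 mul0r.
rewrite /= big_cons => /andP[w_lt ws_lt] x_ann.
pose y := pshift ('X - w%:P) x.
have [K K_ge0 le_yK] : geom_bounded y rho.
  by apply: IHws => //; apply: satisfies_rec_pshift; rewrite mulrC.
have gap_gt0 : 0 < rho - normc w by rewrite subr_gt0.
pose B := normc (x 0%N) + K / (rho - normc w).
have K_le : K <= B * (rho - normc w).
  by rewrite mulrDl divfK ?gt_eqF // lerDr mulr_ge0 ?normc_ge0 ?ltW.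
have KB_ge0 : 0 <= K / (rho - normc w) by rewrite divr_ge0 // ltW.
exists B; first by rewrite addr_ge0 ?normc_ge0.
elim=> [|n IHn]; first by rewrite expr0 mulr1 lerDl.
have -> : x n.+1 = y n + w * x n by rewrite /y pshiftXsubC subrK.
apply: le_trans (le_normcD _ _) _; rewrite Normc.normcM exprS.
have := ler_wpM2l (normc_ge0 w) IHn.
have : K * rho ^+ n <= B * (rho - normc w) * rho ^+ n.
  by apply: ler_wpM2r K_le; rewrite exprn_ge0 // ltW.
have := le_yK n; nra.
Qed.

Lemma geom_bounded_shifts k (f : 'I_k -> nat -> C) (r : 'I_k -> R) :
  (forall j, 1 <= r j) -> (forall j, geom_bounded (f j) (r j)) ->
  exists2 K : R, 0 <= K & forall n (i j : 'I_k), normc (f j (n + i)%N) <= K * r j ^+ n.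
Proof.
move=> r_ge1 fr.
have /choice[Kf KfP] : forall j, exists K, 0 <= K /\ forall n, normc (f j n) <= K * r j ^+ n.
  by move=> j; have [K ? ?] := fr j; exists K.
have Kf_ge0 j : 0 <= Kf j by case: (KfP j).
have le_Kf j n : normc (f j n) <= Kf j * r j ^+ n by case: (KfP j).
have rX_ge0 j m : 0 <= r j ^+ m by rewrite exprn_ge0 // (le_trans ler01).
exists (\sum_j Kf j * r j ^+ k) => [|n i j].
  by rewrite sumr_ge0 // => j _; rewrite mulr_ge0.
apply: le_trans (le_Kf j _) _; rewrite addnC exprD mulrA ler_wpM2r //.
apply: le_trans (_ : Kf j * r j ^+ k <= _).
  by rewrite ler_wpM2l // ler_weXn2l // ltnW.
by rewrite (bigD1 j) //= lerDl sumr_ge0 // => l _; rewrite mulr_ge0.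
Qed.

End GeometricGrowth.

Section HankelDeterminants.
Variable R : realType.
Local Notation C := R[i].
Local Notation normc := (@Normc.normc R).

(* Column [j] becomes [ps j (S)] applied to the first column: a unitriangular
   change of columns, since [ps j] is monic of degree [j]. *)
Lemma det_hankel_pshift (a : nat -> C) n k (ps : nat -> {poly C}) :
  (forall j, (j < k)%N -> ps j \is monic /\ size (ps j) = j.+1) ->
  \det (hankel a n k) = \det (\matrix_(i < k, j < k) pshift (ps j) a (n + i)%N).
Proof.
move=> ps_spec; pose U : 'M[C]_k := \matrix_(l < k, j < k) (ps j)`_l.
have -> : \matrix_(i < k, j < k) pshift (ps j) a (n + i)%N = hankel a n k *m U.
  apply/matrixP => i j; rewrite !mxE (@pshift_widen _ _ _ _ k); last first.
    by rewrite (ps_spec j (ltn_ord j)).2.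
  by apply: eq_bigr => l _; rewrite !mxE mulrC ?addnA.
rewrite det_mulmx -(det_tr U) (@det_trig _ _ U^T).
  rewrite big1 ?mulr1 // => i _; rewrite !mxE.
  by have [/monicP] := ps_spec i (ltn_ord i); rewrite /lead_coef => + size_ps; rewrite size_ps.
apply/is_trig_mxP => i j lt_ij; rewrite !mxE nth_default //.
by rewrite (ps_spec i (ltn_ord i)).2.
Qed.

Lemma normc_det_le k (M : 'M[C]_k) (B : 'I_k -> R) :
  (forall i j, normc (M i j) <= B j) -> normc (\det M) <= k`!%:R * \prod_j B j.
Proof.
move=> le_MB; rewrite /determinant (le_trans (normc_sum _ _ _)) //.
apply: le_trans (_ : \sum_(s : 'S_k) \prod_j B j <= _); last first.
  by rewrite sumr_const card_Sn mulr_natl.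
apply: ler_sum => s _; rewrite Normc.normcM normc_sign mul1r normc_prod.
rewrite [leRHS](reindex_inj (@perm_inj _ s)) ler_prod // => i _.
by rewrite normc_ge0 le_MB.
Qed.

Lemma normc_prodDB_le (I : Type) (r : seq I) (x y : I -> C) (al be : I -> R) :
  (forall i, normc (x i) <= al i) -> (forall i, normc (y i) <= be i) ->
  normc (\prod_(i <- r) (x i + y i) - \prod_(i <- r) x i) <=
    \prod_(i <- r) (al i + be i) - \prod_(i <- r) al i.
Proof.
move=> le_x le_y.
have al_ge0 i : 0 <= al i by apply: le_trans (normc_ge0 _) (le_x i).
have be_ge0 i : 0 <= be i by apply: le_trans (normc_ge0 _) (le_y i).
elim: r => [|i r IHr]; first by rewrite !big_nil subrr Normc.normc0.
rewrite !big_cons.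
set P := \prod_(j <- r) (x j + y j) in IHr *; set Q := \prod_(j <- r) x j in IHr *.
set P' := \prod_(j <- r) (al j + be j) in IHr *; set Q' := \prod_(j <- r) al j in IHr *.
have le_P : normc P <= P'.
  rewrite normc_prod ler_prod // => j _.
  by rewrite normc_ge0 (le_trans (le_normcD _ _)) // lerD.
have -> : (x i + y i) * P - x i * Q = y i * P + x i * (P - Q) by ring.
apply: le_trans (le_normcD _ _) _; rewrite !Normc.normcM.
have le_yP := ler_pM (normc_ge0 _) (normc_ge0 _) (le_y i) le_P.
have le_xPQ := ler_pM (normc_ge0 _) (normc_ge0 _) (le_x i) IHr.
have : be i * P' + al i * (P' - Q') = (al i + be i) * P' - al i * Q' by ring.
lra.
Qed.

Lemma normc_detDB_le k (X Y : 'M[C]_k) (al be : 'I_k -> R) :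
  (forall i j, normc (X i j) <= al j) -> (forall i j, normc (Y i j) <= be j) ->
  normc (\det (X + Y) - \det X) <=
    k`!%:R * (\prod_j (al j + be j) - \prod_j al j).
Proof.
move=> le_X le_Y; rewrite /determinant -sumrB (le_trans (normc_sum _ _ _)) //.
apply: le_trans (_ : \sum_(s : 'S_k) (\prod_j (al j + be j) - \prod_j al j) <= _);
  last by rewrite sumr_const card_Sn mulr_natl.
apply: ler_sum => s _.
rewrite -mulrBr Normc.normcM normc_sign mul1r.
rewrite [X in _ <= X - _](reindex_inj (@perm_inj _ s)).
rewrite [X in _ <= _ - X](reindex_inj (@perm_inj _ s)).
under eq_bigr do rewrite mxE.
by apply: normc_prodDB_le => i; [apply: le_X | apply: le_Y].
Qed.

End HankelDeterminants.

Section Mahler.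
Variable R : realType.
Local Notation C := R[i].
Local Notation normc := (@Normc.normc R).
Implicit Types (rs s : seq C) (a : nat -> C).

Lemma prodr_ge1 (I : Type) (r : seq I) (P : pred I) (F : I -> R) :
  (forall i, P i -> 1 <= F i) -> 1 <= \prod_(i <- r | P i) F i.
Proof.
move=> F_ge1; elim/big_rec: _ => // i x Pi x_ge1.
by rewrite mulr_ege1 ?F_ge1.
Qed.

Definition mahler rs : R := \prod_(w <- rs) Num.max 1 (normc w).

Lemma mahler_ge1 rs : 1 <= mahler rs.
Proof. by apply: prodr_ge1 => w _; rewrite le_max lexx. Qed.

Lemma mahler_take_le k rs : mahler (take k rs) <= mahler rs.
Proof.
rewrite {2}/mahler -{2}(cat_take_drop k rs) big_cat /=.
by apply: ler_peMr; [exact: le_trans ler01 (mahler_ge1 _) | exact: mahler_ge1].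
Qed.

Lemma mahler_large rs :
  mahler rs = \prod_(w <- rs | 1 < normc w) normc w.
Proof.
rewrite /mahler (bigID (fun w => 1 < normc w)) /= [X in _ * X]big1 ?mulr1.
  by apply: eq_bigr => w w_gt1; rewrite max_r // ltW.
by move=> w; rewrite -leNgt => w_le1; rewrite max_l.
Qed.

Definition ge_normc : rel C := fun x y => normc y <= normc x.

Lemma ge_normc_total : total ge_normc.
Proof. by move=> x y; rewrite /ge_normc le_total. Qed.

Lemma ge_normc_trans : transitive ge_normc.
Proof. by move=> x y z; rewrite /ge_normc => le_yx le_zy; apply: le_trans le_zy le_yx. Qed.

Lemma sorted_drop_le s j w : sorted ge_normc s -> w \in drop j s ->
  normc w <= normc (nth 0 s j).
Proof.
move=> s_sorted /(nthP 0)[i lt_i <-]; rewrite nth_drop; rewrite size_drop in lt_i.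
apply: (sorted_leq_nth ge_normc_trans (fun x => lexx _)) => //; rewrite ?inE.
(* The occurrences of [size s] differ in their implicit instances: generalize. *)
all: by move: lt_i; set m := size s; clear; lia.
Qed.

Lemma mahler_sort_pad rs k : mahler (sort ge_normc (rs ++ nseq k 0)) = mahler rs.
Proof.
rewrite /mahler (perm_big _ (permEl (perm_sort _ _))) big_cat /=.
rewrite [X in _ * X]big1_seq ?mulr1 // => w /andP[_ /nseqP[-> _]].
by rewrite Normc.normc0 max_l ?ler01.
Qed.

End Mahler.

Arguments ge_normc {R}.

Section UpperBound.
Variable R : realType.
Local Notation C := R[i].
Local Notation normc := (@Normc.normc R).
Implicit Types (rs : seq C) (a : nat -> C).

Definition prefix_poly (s : seq C) j : {poly C} := \prod_(w <- take j s) ('X - w%:P).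

Lemma prefix_poly_spec (s : seq C) j : (j < size s)%N ->
  prefix_poly s j \is monic /\ size (prefix_poly s j) = j.+1.
Proof.
move=> lt_js; split; first exact: monic_prod_XsubC.
by rewrite size_prod_XsubC size_take lt_js.
Qed.

(* [prefix_poly s j] cancels the [j] largest roots of the annihilator. *)
Lemma geom_bounded_prefix a (s : seq C) j c : sorted ge_normc s ->
  satisfies_rec a (\prod_(w <- s) ('X - w%:P)) -> normc (nth 0 s j) < c ->
  geom_bounded (pshift (prefix_poly s j) a) c.
Proof.
move=> s_sorted a_ann lt_c; have c_gt0 : 0 < c by apply: le_lt_trans (normc_ge0 _) lt_c.
apply: (geom_bounded_roots (ws := drop j s)) => //.
  by apply/allP => w w_drop; apply: le_lt_trans (sorted_drop_le s_sorted w_drop) lt_c.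
by apply: satisfies_rec_pshift; rewrite mulrC -big_cat cat_take_drop.
Qed.

Lemma prefix_pshift_bound a (s : seq C) k (r : 'I_k -> R) :
  sorted ge_normc s -> satisfies_rec a (\prod_(w <- s) ('X - w%:P)) ->
  (forall j, 1 <= r j) -> (forall j : 'I_k, normc (nth 0 s j) < r j) ->
  exists2 K : R, 0 <= K & forall n (i j : 'I_k),
    normc (pshift (prefix_poly s j) a (n + i)%N) <= K * r j ^+ n.
Proof.
move=> s_sorted a_ann r_ge1 lt_r.
apply: (geom_bounded_shifts (f := fun j => pshift (prefix_poly s j) a)) => // j.
exact: geom_bounded_prefix.
Qed.

Lemma pshift_roots_bound x (ws : seq C) k (ps : 'I_k -> {poly C}) rho : 1 <= rho ->
  all (fun w => normc w < rho) ws -> satisfies_rec x (\prod_(w <- ws) ('X - w%:P)) ->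
  exists2 K : R, 0 <= K & forall n (i j : 'I_k),
    normc (pshift (ps j) x (n + i)%N) <= K * rho ^+ n.
Proof.
move=> rho_ge1 ws_lt x_ann.
apply: (geom_bounded_shifts (f := fun j => pshift (ps j) x) (r := fun=> rho)) => // j.
apply: (geom_bounded_roots (ws := ws)) => //; first exact: lt_le_trans ltr01 rho_ge1.
by apply: satisfies_rec_pshift; apply: satisfies_recMr.
Qed.

Lemma hankel_det_upper a rs k rho : 1 < rho ->
  satisfies_rec a (\prod_(w <- rs) ('X - w%:P)) ->
  exists2 L : R, 0 <= L & forall n,
    normc (\det (hankel a n k)) <= L * (rho ^+ k * mahler rs) ^+ n.
Proof.
move=> rho_gt1 a_ann; have rho_ge0 : 0 <= rho by rewrite ltW // (lt_trans ltr01).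
(* Zero roots pad the list so that all [k] columns have a prefix polynomial. *)
pose s := sort ge_normc (rs ++ nseq k 0).
have s_sorted : sorted ge_normc s by apply/sort_sorted/ge_normc_total.
have size_s : size s = (size rs + k)%N by rewrite size_sort size_cat size_nseq.
have a_ann_s : satisfies_rec a (\prod_(w <- s) ('X - w%:P)).
  rewrite (perm_big _ (permEl (perm_sort _ _))) big_cat /=.
  exact: satisfies_recMr.
pose r (j : 'I_k) := Num.max 1 (normc (nth 0 s j)) * rho.
have r_ge1 j : 1 <= r j by rewrite mulr_ege1 ?le_max ?lexx // ltW.
have lt_r (j : 'I_k) : normc (nth 0 s j) < r j.
  apply: (@le_lt_trans _ _ (Num.max 1 (normc (nth 0 s j)))); first by rewrite le_max lexx orbT.
  by rewrite /r ltr_pMr // lt_max ltr01.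
have [K K_ge0 le_K] := prefix_pshift_bound s_sorted a_ann_s r_ge1 lt_r.
exists (k`!%:R * K ^+ k) => [|n]; first by rewrite mulr_ge0 ?exprn_ge0.
have prefix_spec j : (j < k)%N -> prefix_poly s j \is monic /\ size (prefix_poly s j) = j.+1.
  by move=> lt_jk; apply: prefix_poly_spec; rewrite size_s ltn_addl.
rewrite (det_hankel_pshift a n prefix_spec).
apply: le_trans (normc_det_le (B := fun j => K * r j ^+ n) _) _ => [i j|].
  by rewrite mxE le_K.
rewrite -mulrA ler_wpM2l // big_split /= prodr_const card_ord ler_wpM2l ?exprn_ge0 //.
rewrite prodrXl; apply: lerXn2r; rewrite ?nnegrE.
- by apply: prodr_ge0 => j _; apply: le_trans ler01 (r_ge1 j).
- by rewrite mulr_ge0 ?exprn_ge0 // (le_trans ler01 (mahler_ge1 _)).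
rewrite /r big_split /= prodr_const card_ord mulrC ler_wpM2l ?exprn_ge0 //.
have -> : mahler rs = mahler s by rewrite mahler_sort_pad.
apply: le_trans (mahler_take_le k s); rewrite le_eqVlt; apply/orP; left; apply/eqP.
rewrite /mahler (big_nth 0) size_takel ?size_s ?leq_addl //.
by rewrite big_mkord; apply: eq_bigr => j _; rewrite nth_take.
Qed.

Lemma GR_le_mahler a rs k :
  satisfies_rec a (\prod_(w <- rs) ('X - w%:P)) -> (GR k a <= (mahler rs)%:E)%E.
Proof.
move=> a_ann; have M_gt0 : 0 < mahler rs by apply: lt_le_trans (mahler_ge1 rs).
have M_ge0 := ltW M_gt0.
case: k => [|k]; first by rewrite lee_fin mahler_ge1.
rewrite /GR; apply/lee_addgt0Pr => eps eps_gt0.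
have [rho [rho_gt1 le_rho]] := exists_expr_le1D k.+2 (divr_gt0 eps_gt0 M_gt0).
have rho_ge0 : 0 <= rho by rewrite ltW // (lt_trans ltr01).
have [L L_ge0 le_L] := hankel_det_upper k.+1 rho_gt1 a_ann.
have [N le_N] := expr_unbounded L rho_gt1.
have Meps_ge0 : 0 <= mahler rs + eps by rewrite addr_ge0 // ltW.
have base_ge0 : 0 <= rho ^+ k.+1 * mahler rs by rewrite mulr_ge0 ?exprn_ge0 // ltW.
apply: (@limn_esup_le _ _ _ (maxn N 1)) => n le_n.
apply: (powRV_le _ (normc_ge0 _) Meps_ge0); first lia.
apply: le_trans (le_L n) _.
apply: le_trans (_ : rho ^+ n * (rho ^+ k.+1 * mahler rs) ^+ n <= _).
  by rewrite ler_wpM2r ?le_N ?exprn_ge0 //; lia.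
rewrite -exprMn mulrA -exprS; apply: lerXn2r; rewrite ?nnegrE.
- by rewrite mulr_ge0 ?exprn_ge0.
- exact: Meps_ge0.
apply: le_trans (_ : (1 + eps / mahler rs) * mahler rs <= _).
  by rewrite ler_pM2r.
by rewrite mulrDl mul1r divfK ?gt_eqF.
Qed.

End UpperBound.

Section HankelRecurrence.
Variable R : realType.
Local Notation C := R[i].
Local Notation normc := (@Normc.normc R).
Implicit Types (P Q : {poly C}) (A a s : nat -> C).

Lemma pshift_monic A P m n : P \is monic -> size P = m.+1 ->
  pshift P A n = \sum_(i < m) P`_i * A (n + i)%N + A (n + m)%N.
Proof.
move=> /monicP P_monic size_P; rewrite /pshift size_P big_ord_recr /=.
by move: P_monic; rewrite /lead_coef size_P => ->; rewrite mul1r.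
Qed.

Lemma satisfies_rec_eq0 A P m : P \is monic -> size P = m.+1 -> satisfies_rec A P ->
  (forall j, (j < m)%N -> A j = 0) -> A =1 fun=> 0.
Proof.
move=> P_monic size_P; rewrite satisfies_recE => A_ann A0 n; elim/ltn_ind: n => n IHn.
have [//|le_mn] := ltnP n m; first exact: A0.
have := A_ann (n - m)%N; rewrite (pshift_monic _ _ P_monic size_P) subnK //.
by rewrite big1 ?add0r // => i _; rewrite IHn ?mulr0 //; have := ltn_ord i; lia.
Qed.

Lemma hankelS A P n : P \is monic -> satisfies_rec A P ->
  hankel A n.+1 (size P).-1 = companionmx P *m hankel A n (size P).-1.
Proof.
move=> P_monic A_ann.
have : size P = (size P).-1.+1 by rewrite prednK // size_poly_gt0 monic_neq0.
set m := (size P).-1 => size_P; apply/matrixP => i j; rewrite !mxE.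
under eq_bigr do rewrite !mxE.
have [i_last|i_last] := eqVneq (i : nat) m.-1.
  have := A_ann (n + j)%N; rewrite -/(pshift _ _ _) (pshift_monic _ _ P_monic size_P).
  move/eqP; rewrite addrC addr_eq0 => /eqP.
  rewrite (_ : (n + j + m = n.+1 + i + j)%N); last by move: (ltn_ord i); lia.
  move=> ->; rewrite -sumrN; apply: eq_bigr => l _; rewrite mulNr; congr (- (_ * A _)); lia.
have lt_im : (i.+1 < m)%N by have := ltn_ord i; lia.
rewrite (bigD1 (Ordinal lt_im)) //= eqxx mul1r big1 ?addr0; first by congr A; lia.
move=> l /eqP neq_l; rewrite (_ : (i.+1 == l :> nat) = false) ?mul0r //.
by apply/eqP => eq_l; apply: neq_l; apply: val_inj.
Qed.

Lemma normc_det_hankel A (ws : seq C) n :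
  satisfies_rec A (\prod_(w <- ws) ('X - w%:P)) ->
  normc (\det (hankel A n (size ws))) =
    normc (\det (hankel A 0 (size ws))) * (\prod_(w <- ws) normc w) ^+ n.
Proof.
set P := \prod_(w <- ws) _ => A_ann; have P_monic : P \is monic by apply: monic_prod_XsubC.
have size_P : (size P).-1 = size ws by rewrite size_prod_XsubC.
have det_comp : normc (\det (companionmx P)) = \prod_(w <- ws) normc w.
  have := char_poly_det (companionmx P); rewrite companionmxK // => /(congr1 normc).
  rewrite Normc.normcM normc_sign mul1r => <-.
  rewrite -horner_coef0 horner_prod normc_prod.
  by apply: eq_bigr => w _; rewrite hornerXsubC sub0r normcN.
rewrite -size_P; elim: n => [|n IHn]; first by rewrite expr0 mulr1.
by rewrite hankelS // det_mulmx Normc.normcM IHn det_comp exprS mulrCA mulrA.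
Qed.

Lemma satisfies_rec_coprime_split a P Q : coprimep P Q -> satisfies_rec a (P * Q) ->
  exists A s, [/\ forall n, a n = A n + s n, satisfies_rec A P & satisfies_rec s Q].
Proof.
move=> /Bezout_eq1_coprimepP[[u v] /= uv_eq1] a_ann.
exists (pshift (v * Q) a), (pshift (u * P) a); split.
- by move=> n; rewrite -pshiftD addrC uv_eq1 pshift1.
- by apply: satisfies_rec_pshift; rewrite mulrCA; apply: satisfies_recMl.
- by apply: satisfies_rec_pshift; rewrite mulrCA [Q * P]mulrC; apply: satisfies_recMl.
Qed.

Lemma is_minpoly_split a A s P Q : is_minpoly a (P * Q) -> P \is monic -> Q \is monic ->
  (forall n, a n = A n + s n) -> satisfies_rec A P -> satisfies_rec s Q ->
  is_minpoly A P.
Proof.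
move=> [_ _ PQ_min] P_monic Q_monic a_eq A_ann s_ann; split=> // q q_monic A_q.
have : satisfies_rec a (q * Q).
  apply: (@eq_satisfies_rec _ (fun n => A n + s n)) => // .
  by apply: satisfies_rec_seqD; [apply: satisfies_recMr | apply: satisfies_recMl].
move=> /(PQ_min _ (rpredM q_monic Q_monic)).
rewrite !size_mul ?monic_neq0 //; have := size_poly_gt0 Q; rewrite monic_neq0 //.
by move: (size P) (size Q) (size q) => x y z; lia.
Qed.

Lemma minpoly_hankel_det_neq0 A P : is_minpoly A P -> \det (hankel A 0 (size P).-1) != 0.
Proof.
case=> P_monic A_ann P_min.
have : size P = (size P).-1.+1 by rewrite prednK // size_poly_gt0 monic_neq0.
set m := (size P).-1 => size_P; apply/negP => /det0P[v v_neq0 vH].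
have q_neq0 : rVpoly v != 0.
  by apply: contraNneq v_neq0 => q0; rewrite -[v]rVpolyK q0 linear0.
have A_q : satisfies_rec A (rVpoly v).
  pose e := pshift (rVpoly v) A.
  have e_ann : satisfies_rec e P by apply: satisfies_rec_pshift; apply: satisfies_recMr.
  suff e0 : e =1 fun=> 0 by rewrite satisfies_recE.
  apply: (satisfies_rec_eq0 _ size_P e_ann) => // j lt_jm.
  have := congr1 (fun M : 'rV_m => M 0 (Ordinal lt_jm)) vH; rewrite !mxE => <-.
  rewrite /e (pshift_widen _ _ (size_poly _ _)).
  by apply: eq_bigr => i _; rewrite coef_rVpoly_ord !mxE add0n addnC mulrC.
have [Aq' q'_monic] := satisfies_rec_monic q_neq0 A_q.
have := P_min _ q'_monic Aq'; rewrite size_scale ?invr_eq0 ?lead_coef_eq0 //.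
have : (size (rVpoly v) <= m)%N := size_poly _ _.
by rewrite size_P; move: (size (rVpoly v)) => k; lia.
Qed.

End HankelRecurrence.

Section LowerBound.
Variable R : realType.
Local Notation C := R[i].
Local Notation normc := (@Normc.normc R).

Lemma normc_det_perturb_le m (X Y : 'M[C]_m) (b : 'I_m -> R) (mu rho K : R) n :
  1 <= mu -> (forall j, mu <= b j) -> 0 < rho -> 0 <= K ->
  (forall i j, normc (X i j) <= K * (b j * rho) ^+ n) ->
  (forall i j, normc (Y i j) <= K * rho ^+ n) ->
  normc (\det (X + Y) - \det X) <=
    m`!%:R * K ^+ m * 2 ^+ m * (\prod_j b j) ^+ n * (rho ^+ m / mu) ^+ n.
Proof.
move=> mu_ge1 le_mu rho_gt0 K_ge0 le_X le_Y.
have mu_gt0 : 0 < mu by apply: lt_le_trans mu_ge1.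
have b_ge0 j : 0 <= b j by apply: le_trans (ltW mu_gt0) (le_mu j).
set B := \prod_j b j; have B_ge0 : 0 <= B by apply: prodr_ge0.
set c := K * rho ^+ n; have c_ge0 : 0 <= c by rewrite mulr_ge0 // exprn_ge0 // ltW.
apply: le_trans (normc_detDB_le le_X le_Y) _.
have -> : \prod_j (K * (b j * rho) ^+ n + K * rho ^+ n) = c ^+ m * \prod_j (b j ^+ n + 1).
  rewrite -[m in c ^+ m]card_ord -prodr_const -big_split /=.
  by apply: eq_bigr => j _; rewrite /c exprMn; ring.
have -> : \prod_j (K * (b j * rho) ^+ n) = c ^+ m * B ^+ n.
  rewrite -[m in c ^+ m]card_ord -prodr_const /B -prodrXl -big_split /=.
  by apply: eq_bigr => j _; rewrite /c exprMn; ring.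
pose t := (mu ^+ n)^-1.
have t_ge0 : 0 <= t by rewrite invr_ge0 exprn_ge0 // ltW.
have t_le1 : t <= 1 by rewrite invf_le1 ?exprn_gt0 // exprn_ege1.
have le_prod : \prod_j (b j ^+ n + 1) <= B ^+ n * (1 + (2 ^+ m - 1) * t).
  apply: le_trans (_ : \prod_j (b j ^+ n * (1 + t)) <= _).
    apply: ler_prod => j _; rewrite addr_ge0 ?exprn_ge0 //= mulrDr mulr1 lerD2l.
    rewrite /t ler_pdivlMr ?exprn_gt0 // mul1r.
    by apply: lerXn2r; rewrite ?nnegrE ?le_mu ?b_ge0 // ltW.
  rewrite big_split /= prodr_const card_ord /B prodrXl ler_wpM2l ?exprn_ge0 //.
  by apply: exprD1_le; rewrite t_ge0 t_le1.
have le_diff : c ^+ m * \prod_j (b j ^+ n + 1) - c ^+ m * B ^+ n <=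
    c ^+ m * (B ^+ n * (2 ^+ m * t)).
  rewrite -mulrBr ler_wpM2l ?exprn_ge0 // lerBlDl (le_trans le_prod) //.
  by rewrite mulrDr mulr1 lerD2l ler_wpM2l ?exprn_ge0 // ler_wpM2r // lerBlDr lerDl.
apply: le_trans (ler_wpM2l (ler0n _ _) le_diff) _; rewrite le_eqVlt; apply/orP; left.
by apply/eqP; rewrite /c /t !exprMn -!exprM mulnC exprVn; ring.
Qed.

Lemma det_perturb_lower m (X Y : nat -> 'M[C]_m) (b : 'I_m -> R) (mu rho K D : R) :
  1 <= mu -> (forall j, mu <= b j) -> 1 < rho -> rho ^+ m < mu -> 0 <= K -> 0 < D ->
  (forall n, normc (\det (X n)) = D * (\prod_j b j) ^+ n) ->
  (forall n i j, normc (X n i j) <= K * (b j * rho) ^+ n) ->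
  (forall n i j, normc (Y n i j) <= K * rho ^+ n) ->
  exists N, forall n, (N <= n)%N -> D / 2 * (\prod_j b j) ^+ n <= normc (\det (X n + Y n)).
Proof.
move=> mu_ge1 le_mu rho_gt1 lt_mu K_ge0 D_gt0 det_X le_X le_Y.
have rho_gt0 : 0 < rho by apply: lt_trans rho_gt1.
have rhom_gt0 : 0 < rho ^+ m by rewrite exprn_gt0.
set B := \prod_j b j.
have B_ge0 : 0 <= B.
  by apply: prodr_ge0 => j _; apply: le_trans (le_trans ler01 mu_ge1) (le_mu j).
set E := m`!%:R * K ^+ m * 2 ^+ m.
have E_ge0 : 0 <= E by rewrite !mulr_ge0 ?exprn_ge0.
have q_gt1 : 1 < mu / rho ^+ m by rewrite ltr_pdivlMr // mul1r.
have [N le_N] := expr_unbounded (2 * E / D) q_gt1.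
exists N => n le_Nn; have := le_N n le_Nn; rewrite ler_pdivrMr // => le_q.
have q_gt0 : 0 < (mu / rho ^+ m) ^+ n by rewrite exprn_gt0 // (lt_trans ltr01).
have le_err := normc_det_perturb_le mu_ge1 le_mu rho_gt0 K_ge0 (le_X n) (le_Y n).
have err_le : E * B ^+ n * (rho ^+ m / mu) ^+ n <= D / 2 * B ^+ n.
  rewrite mulrAC ler_wpM2r ?exprn_ge0 //.
  rewrite -invf_div exprVn ler_pdivrMr //; lra.
have le_det := normcB_le (\det (X n + Y n)) (\det (X n + Y n) - \det (X n)).
rewrite opprB addrC subrK det_X -/B in le_det.
rewrite -/B -/E in le_err; lra.
Qed.

Lemma limn_esup_root_ge (u : nat -> R) (B D : R) N :
  0 < D -> 0 <= B -> (forall n, (N <= n)%N -> D * B ^+ n <= u n) ->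
  (B%:E <= limn_esup (fun n => (u n `^ (n%:R^-1))%:E))%E.
Proof.
move=> D_gt0 B_ge0 le_u; apply/lee_mul01Pr; first by rewrite lee_fin.
move=> r /andP[r_gt0 r_lt1].
have rV_gt1 : 1 < r^-1 by rewrite invf_gt1.
have [M le_M] := expr_unbounded D^-1 rV_gt1.
rewrite -EFinM; apply: (@limn_esup_ge _ _ _ (maxn (maxn N M) 1)) => n le_n.
have le_Nn : (N <= n)%N by lia.
have u_ge0 : 0 <= u n by apply: le_trans (le_u n le_Nn); rewrite mulr_ge0 ?exprn_ge0 // ltW.
apply: powRV_ge => //; [lia | by rewrite mulr_ge0 // ltW |].
apply: le_trans (le_u n le_Nn); rewrite exprMn ler_wpM2r ?exprn_ge0 //.
have le_Mn : (M <= n)%N by lia.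
by have := le_M n le_Mn; rewrite exprVn lef_pV2 ?posrE ?exprn_gt0 ?invr_gt0.
Qed.

End LowerBound.

Section GrowthRate.
Variable R : realType.
Local Notation C := R[i].
Local Notation normc := (@Normc.normc R).
Implicit Types (a A s : nat -> C) (rs bs ss : seq C).

Lemma exists_common_gt1 bs : all (fun w => 1 < normc w) bs ->
  exists2 mu : R, 1 < mu & forall w, w \in bs -> mu <= normc w.
Proof.
elim: bs => [|w bs IHbs] /=; first by exists 2 => //; rewrite ltr1n.
case/andP => w_gt1 /IHbs[mu mu_gt1 le_mu].
exists (Num.min (normc w) mu) => [|x]; first by rewrite lt_min w_gt1.
by rewrite in_cons => /orP[/eqP->|/le_mu]; rewrite ge_min ?lexx // => ->; rewrite orbT.
Qed.

Lemma GR_ge_large_roots a A s bs ss :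
  bs != [::] -> sorted ge_normc bs ->
  all (fun w => 1 < normc w) bs -> all (fun w => normc w <= 1) ss ->
  (forall n, a n = A n + s n) ->
  satisfies_rec A (\prod_(w <- bs) ('X - w%:P)) -> \det (hankel A 0 (size bs)) != 0 ->
  satisfies_rec s (\prod_(w <- ss) ('X - w%:P)) ->
  ((\prod_(w <- bs) normc w)%:E <= GR (size bs) a)%E.
Proof.
move=> bs_neq0 bs_sorted bs_large ss_small a_eq A_ann detA_neq0 s_ann.
have [k size_bs] : exists k, size bs = k.+1.
  by exists (size bs).-1; rewrite prednK // lt0n size_eq0.
rewrite size_bs in detA_neq0 *.
pose b (j : 'I_k.+1) := normc (nth 0 bs j).
have prod_b : \prod_j b j = \prod_(w <- bs) normc w.
  by rewrite [RHS](big_nth 0) size_bs big_mkord.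
have [mu mu_gt1 le_mu] := exists_common_gt1 bs_large.
have b_ge_mu j : mu <= b j by apply/le_mu/mem_nth; rewrite size_bs.
have gap_gt0 : 0 < (mu - 1) / 2 by rewrite divr_gt0 // subr_gt0.
have [rho [rho_gt1 le_rho]] := exists_expr_le1D k.+1 gap_gt0.
have lt_mu : rho ^+ k.+1 < mu by apply: le_lt_trans le_rho _; lra.
have rho_gt0 : 0 < rho by apply: lt_trans rho_gt1.
have b_gt0 j : 0 < b j by apply: lt_le_trans (b_ge_mu j); apply: lt_trans mu_gt1.
pose X n := \matrix_(i < k.+1, j < k.+1) pshift (prefix_poly bs j) A (n + i)%N.
pose Y n := \matrix_(i < k.+1, j < k.+1) pshift (prefix_poly bs j) s (n + i)%N.
have br_ge1 j : 1 <= b j * rho by rewrite mulr_ege1 // ltW // (lt_le_trans mu_gt1).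
have lt_br (j : 'I_k.+1) : normc (nth 0 bs j) < b j * rho by rewrite -/(b j) ltr_pMr ?b_gt0.
have [Kx Kx_ge0 le_Kx] := prefix_pshift_bound bs_sorted A_ann br_ge1 lt_br.
have ss_lt : all (fun w => normc w < rho) ss.
  by apply/allP => w /(allP ss_small)/le_lt_trans; apply.
have [Ky Ky_ge0 le_Ky] :=
  pshift_roots_bound (fun j : 'I_k.+1 => prefix_poly bs j) (ltW rho_gt1) ss_lt s_ann.
pose K := Num.max Kx Ky; have K_ge0 : 0 <= K by rewrite le_max Kx_ge0.
have prefix_spec j :
    (j < k.+1)%N -> prefix_poly bs j \is monic /\ size (prefix_poly bs j) = j.+1.
  by move=> lt_jm; apply: prefix_poly_spec; rewrite size_bs.
pose D := normc (\det (hankel A 0 k.+1)); have D_gt0 : 0 < D by rewrite normc_gt0.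
have det_X n : normc (\det (X n)) = D * (\prod_j b j) ^+ n.
  by rewrite /D -det_hankel_pshift // prod_b -size_bs normc_det_hankel.
have le_KX n i j : normc (X n i j) <= K * (b j * rho) ^+ n.
  by rewrite mxE (le_trans (le_Kx n i j)) // ler_wpM2r ?exprn_ge0 ?le_max ?lexx // mulr_ge0 ?ltW.
have le_KY n i j : normc (Y n i j) <= K * rho ^+ n.
  by rewrite mxE (le_trans (le_Ky n i j)) // ler_wpM2r ?exprn_ge0 ?le_max ?lexx ?orbT // ltW.
have [N le_N] :=
  det_perturb_lower (ltW mu_gt1) b_ge_mu rho_gt1 lt_mu K_ge0 D_gt0 det_X le_KX le_KY.
rewrite /GR -prod_b; apply: (limn_esup_root_ge (D := D / 2) (N := N)).
- by rewrite divr_gt0.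
- by apply: prodr_ge0 => j _; apply: ltW.
move=> n le_Nn; apply: le_trans (le_N n le_Nn) _; rewrite le_eqVlt; apply/orP; left.
apply/eqP; congr (normc _); rewrite (det_hankel_pshift a n prefix_spec); congr (\det _).
by apply/matrixP => i j; rewrite !mxE (eq_pshift _ a_eq) pshift_seqD.
Qed.

End GrowthRate.

Section MaxGrowthRate.
Variable R : realType.
Local Notation C := R[i].
Local Notation normc := (@Normc.normc R).
Implicit Types (a : nat -> C) (rs : seq C).

Lemma coprimep_prod_XsubC (P : {poly C}) rs : {in rs, forall w, ~~ root P w} ->
  coprimep P (\prod_(w <- rs) ('X - w%:P)).
Proof.
elim: rs => [|w rs IHrs] P_rs; first by rewrite big_nil coprimep1.
rewrite big_cons coprimepMr coprimep_XsubC P_rs ?mem_head // IHrs // => x x_rs.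
by rewrite P_rs // in_cons x_rs orbT.
Qed.

Lemma GR_ge_mahler a rs : is_minpoly a (\prod_(w <- rs) ('X - w%:P)) ->
  exists k, ((mahler rs)%:E <= GR k a)%E.
Proof.
move=> a_min; pose large w := 1 < normc w.
pose bs := sort ge_normc (seq.filter large rs); pose ss := seq.filter (predC large) rs.
have perm_rs : perm_eq rs (bs ++ ss).
  by rewrite -(perm_filterC large rs) perm_cat2r perm_sym perm_sort.
have bs_large : all large bs by rewrite all_sort filter_all.
have M_eq : mahler rs = \prod_(w <- bs) normc w.
  by rewrite mahler_large -big_filter (perm_big _ (permEl (perm_sort _ _))).
have [bs0 | bs_neq0] := eqVneq bs [::].
  by exists 0%N; rewrite M_eq bs0 big_nil.
set Pb := \prod_(w <- bs) ('X - w%:P); set Ps := \prod_(w <- ss) ('X - w%:P).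
have pa_eq : \prod_(w <- rs) ('X - w%:P) = Pb * Ps by rewrite (perm_big _ perm_rs) big_cat.
have [Pb_monic Ps_monic] : Pb \is monic /\ Ps \is monic by split; apply: monic_prod_XsubC.
have coprime_bs_ss : coprimep Pb Ps.
  rewrite coprimep_sym; apply: coprimep_prod_XsubC => w w_bs.
  rewrite /Ps root_prod_XsubC mem_filter negb_and /= negbK.
  by rewrite (allP bs_large).
rewrite pa_eq in a_min; have [_ a_ann _] := a_min.
have [A [s [a_eq A_ann s_ann]]] := satisfies_rec_coprime_split coprime_bs_ss a_ann.
have A_min := is_minpoly_split a_min Pb_monic Ps_monic a_eq A_ann s_ann.
have := minpoly_hankel_det_neq0 A_min; rewrite size_prod_XsubC /= => detA_neq0.
exists (size bs); rewrite M_eq.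
apply: (GR_ge_large_roots bs_neq0 _ bs_large _ a_eq A_ann detA_neq0 s_ann).
  exact/sort_sorted/ge_normc_total.
by apply/allP => w; rewrite mem_filter /= -leNgt => /andP[].
Qed.

Lemma ereal_sup_GR a rs : is_minpoly a (\prod_(w <- rs) ('X - w%:P)) ->
  ereal_sup [set GR k a | k in [set: nat]] = (mahler rs)%:E.
Proof.
move=> a_min; have [_ a_ann _] := a_min; apply/eqP; rewrite eq_le; apply/andP; split.
  by apply: ge_ereal_sup => _ [k _ <-]; apply: GR_le_mahler.
have [k le_k] := GR_ge_mahler a_min.
by apply: le_trans le_k _; apply: ereal_sup_ubound; exists k.
Qed.

Lemma eq_mahler rs1 rs2 :
  (forall z, 1 < normc z -> count_mem z rs1 = count_mem z rs2) -> mahler rs1 = mahler rs2.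
Proof.
move=> count_eq; rewrite !mahler_large -!(big_filter _ (fun w => 1 < normc w)).
apply: perm_big; apply/allP => x _; apply/eqP; rewrite !count_filter.
have [x_gt1|x_le1] := boolP (1 < normc x).
  have count_x s : count (predI (pred1 x) (fun w => 1 < normc w)) s = count_mem x s.
    by apply: eq_count => y /=; case: eqP => // ->; rewrite x_gt1.
  by rewrite !count_x count_eq.
have count_x s : count (predI (pred1 x) (fun w => 1 < normc w)) s = 0%N.
  rewrite (@eq_count _ _ pred0) ?count_pred0 // => y /=.
  by case: eqP => // ->; rewrite (negPf x_le1).
by rewrite !count_x.
Qed.

End MaxGrowthRate.

Unset Implicit Arguments.
Theorem proposition2p3 (R : realType) (a b : nat -> R[i]) :
  lin_recurrent a -> lin_recurrent b ->
  (exists M : R, forall n : nat, Normc.normc (a n - b n) <= M) ->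
  (forall pa pb : {poly R[i]}, is_minpoly a pa -> is_minpoly b pb ->
     forall z : R[i], 1 < Normc.normc z -> mup z pa = mup z pb) /\
  ereal_sup [set GR k a | k in [set: nat]] = ereal_sup [set GR k b | k in [set: nat]].
Proof.
move=> a_rec b_rec [M le_M].
have ab_bd : bounded_seq (fun n => a n - b n) by exists M.
have ba_bd : bounded_seq (fun n => b n - a n) by exists M => n; rewrite -opprB normcN.
have mup_eq pa pb : is_minpoly a pa -> is_minpoly b pb ->
    forall z : R[i], 1 < Normc.normc z -> mup z pa = mup z pb.
  move=> a_min b_min z z_gt1; apply/eqP; rewrite eqn_leq.
  by rewrite (mup_large_le ab_bd a_min b_min z_gt1) (mup_large_le ba_bd b_min a_min z_gt1).
split; first exact: mup_eq.
have [pa a_min] := exists_minpoly a_rec; have [pb b_min] := exists_minpoly b_rec.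
have mup_ab := mup_eq _ _ a_min b_min.
have [rsa pa_eq] := closed_field_poly_normal pa.
have [rsb pb_eq] := closed_field_poly_normal pb.
have [pa_monic _ _] := a_min; have [pb_monic _ _] := b_min.
move: pa_eq pb_eq; rewrite (monicP pa_monic) (monicP pb_monic) !scale1r => pa_eq pb_eq.
rewrite pa_eq in a_min; rewrite pb_eq in b_min.
apply: etrans (ereal_sup_GR a_min) _; apply: esym; apply: etrans (ereal_sup_GR b_min) _.
congr EFin.
by apply: eq_mahler => z z_gt1; rewrite -!mu_prod_XsubC -pa_eq -pb_eq mup_ab.
Qed.
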